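(* Let $\mathcal P$ be a compact subset of $\mathcal W$ and let $P(1),P(2),P(3),\ldots$ be a sequence of matrices from $\mathcal P$. Suppose $j_1<j_2<\cdots$ is an infinite increasing sequence of indices such that each $P(j_r)$ is a Sarymsakov matrix (i.e., $P(j_r)\in\mathcal S_1$) and the set $\bigcup_{r\ge1}\{P(j_r)\}$ is compact. If there exists an integer $T$ such that $j_{r+1}-j_r\le T$ for all $r\ge1$, then $P(k)\cdots P(2)P(1)$ converges as $k\to\infty$ to a rank-one matrix of the form $\mathbf 1c^T$ with $c_i\ge0$ and $\sum_i c_i=1$.
   Context: Let $\mathcal N=\{1,\ldots,n\}$; all matrices are $n\times n$. A matrix is stochastic if it is entrywise nonnegative with row sums $1$. For stochastic $P$ and $\mathcal A\subseteq\mathcal N$, $F_P(\mathcal A)=\{j:\ p_{ij}>0\text{ for some } i\in\mathcal A\}$. $\mathcal S_1$ (Sarymsakov matrices) is the set of stochastic $P$ such that for any disjoint nonempty $\mathcal A,\tilde{\mathcal A}\subseteq\mathcal N$, either $F_P(\mathcal A)\cap F_P(\tilde{\mathcal A})\neq\emptyset$, or $F_P(\mathcal A)\cap F_P(\tilde{\mathcal A})=\emptyset$ and $|F_P(\mathcal A)\cup F_P(\tilde{\mathcal A})|>|\mathcal A\cup\tilde{\mathcal A}|$. $\mathcal W$ is the set of stochastic $P$ such that for any disjoint nonempty $\mathcal A,\tilde{\mathcal A}\subseteq\mathcal N$, either $F_P(\mathcal A)\cap F_P(\tilde{\mathcal A})\neq\emptyset$, or $F_P(\mathcal A)\cap F_P(\tilde{\mathcal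 A})=\emptyset$ and $|F_P(\mathcal A)\cup F_P(\tilde{\mathcal A})|\ge|\mathcal A\cup\tilde{\mathcal A}|$. $\mathbf 1$ is the all-ones column vector. *)

From mathcomp Require Import all_boot.
From Stdlib Require Import Reals.
Set Implicit Arguments. Unset Strict Implicit. Unset Printing Implicit Defensive.

Definition Mat (n : nat) := 'I_n -> 'I_n -> R.

Definition rsum (n : nat) (f : 'I_n -> R) : R := \big[Rplus/R0]_(k : 'I_n) f k.

Definition mmul (n : nat) (A B : Mat n) : Mat n :=
  fun i j => rsum (fun k => (A i k * B k j)%R).

Definition idm (n : nat) : Mat n := fun i j => if i == j then R1 else R0.

Fixpoint lprod (n : nat) (P : nat -> Mat n) (k : nat) : Mat n :=
  match k with
  | O => @idm n
  | S k' => mmul (P k) (lprod P k')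
  end.

Definition stochastic (n : nat) (P : Mat n) : Prop :=
  (forall i j, (0 <= P i j)%R) /\ (forall i, rsum (fun j => P i j) = R1).

Definition posb (x : R) : bool := if Rlt_dec R0 x then true else false.
Definition Fset (n : nat) (P : Mat n) (A : {set 'I_n}) : {set 'I_n} :=
  [set j | [exists i in A, posb (P i j)]].

Definition Sarymsakov (n : nat) (P : Mat n) : Prop :=
  stochastic P /\
  forall A B : {set 'I_n}, A != set0 -> B != set0 -> [disjoint A & B] ->
    (Fset P A :&: Fset P B != set0) \/
    (Fset P A :&: Fset P B = set0 /\ (#|A :|: B| < #|Fset P A :|: Fset P B|)%N).

Definition classW (n : nat) (P : Mat n) : Prop :=
  stochastic P /\
  forall A B : {set 'I_n}, A != set0 -> B != set0 -> [disjoint A & B] ->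
    (Fset P A :&: Fset P B != set0) \/
    (Fset P A :&: Fset P B = set0 /\ (#|A :|: B| <= #|Fset P A :|: Fset P B|)%N).

(* Compactness of a set of matrices in R^{n x n} (a metric space), stated as
   sequential compactness w.r.t. entrywise convergence. *)
Definition mat_compact (n : nat) (S : Mat n -> Prop) : Prop :=
  forall u : nat -> Mat n, (forall k, S (u k)) ->
    exists phi : nat -> nat, (forall k, (phi k < phi k.+1)%N) /\
    exists L : Mat n, S L /\ forall i j, Un_cv (fun k => u (phi k) i j) (L i j).

(* Compactness gives one threshold [d > 0] such that, with "positive entry" replaced by
   "entry at least [d]", every factor still satisfies the [W] expansion condition and every
   factor [P (j r)] the strict [S_1] one.  Following such entries backwards from two rows
   through a window containing [n] Sarymsakov factors (of length at most [n T]), the two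
   reached sets cannot stay disjoint, since their union would grow past [n].  So any two
   rows of the window product share a column with weight at least [d ^ (n T)], each window
   contracts the oscillation of every column of [P(k) ... P(1)] by [1 - d ^ (n T)], and the
   columns converge to constants. *)

From HB Require Import structures.
From mathcomp Require Import all_boot.
From Stdlib Require Import Reals Lra Lia Classical IndefiniteDescription.
From mathcomp Require Import zify.
Set Implicit Arguments. Unset Strict Implicit. Unset Printing Implicit Defensive.

Lemma Rplus_associative : associative Rplus. Proof. by move=> *; ring. Qed.
HB.instance Definition _ :=
  Monoid.isComLaw.Build R R0 Rplus Rplus_associative Rplus_comm Rplus_0_l.

Open Scope R_scope.

Section RealSums.
Variable n : nat.
Implicit Types f g : 'I_n -> R.

Lemma rsum_ge0 f : (forall i, 0 <= f i) -> 0 <= rsum f.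
Proof. by move=> H; apply: (big_ind (fun x => 0 <= x)) => // *; lra. Qed.

Lemma rsum_le f g : (forall i, f i <= g i) -> rsum f <= rsum g.
Proof. by move=> H; apply: (big_ind2 (fun x y => x <= y)) => // *; lra. Qed.

Lemma rsum_ge_term f k : (forall i, 0 <= f i) -> f k <= rsum f.
Proof.
move=> H; rewrite /rsum (bigD1 k) //=.
set X := bigop _ _ _; suff : 0 <= X by lra.
by apply: (big_ind (fun x => 0 <= x)) => // *; lra.
Qed.

Lemma rsumD f g : rsum (fun i => f i + g i) = rsum f + rsum g.
Proof. exact: big_split. Qed.

Lemma rsumZ c f : rsum (fun i => c * f i) = c * rsum f.
Proof.
by apply: (big_rec2 (fun x y => x = c * y)) => [|i x y _ ->]; ring.
Qed.

Lemma eq_rsum f g : (forall i, f i = g i) -> rsum f = rsum g.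
Proof. by move=> H; apply: eq_bigr. Qed.

Lemma exchange_rsum (F : 'I_n -> 'I_n -> R) :
  rsum (fun i => rsum (fun j => F i j)) = rsum (fun j => rsum (fun i => F i j)).
Proof. exact: exchange_big. Qed.

Lemma rsum_idm i (v : 'I_n -> R) : rsum (fun l => idm i l * v l) = v i.
Proof.
rewrite /rsum (bigD1 i) //= /idm eqxx big1 /=; first ring.
by move=> l /negbTE; rewrite eq_sym => ->; ring.
Qed.

Lemma rsum_const c : rsum (fun _ : 'I_n => c) = INR n * c.
Proof.
rewrite /rsum big_const_ord; elim: n => [|m IH]; first by rewrite /=; ring.
by rewrite iterS IH S_INR; ring.
Qed.

Lemma cv_rsum (u : nat -> 'I_n -> R) (c : 'I_n -> R) :
  (forall i, Un_cv (fun t => u t i) (c i)) -> Un_cv (fun t => rsum (u t)) (rsum c).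
Proof.
move=> H; rewrite /rsum; elim: (index_enum _) => [|x r IH].
  rewrite big_nil => e he; exists O => t _.
  by rewrite big_nil /R_dist Rminus_0_r Rabs_R0.
rewrite big_cons; apply: Un_cv_ext (CV_plus _ _ _ _ (H x) IH) => t.
by rewrite big_cons.
Qed.

End RealSums.

Section Stochastic.
Variable n : nat.
Implicit Types M : Mat n.

Lemma stochastic_idm : stochastic (@idm n).
Proof.
split=> [i j|i]; first by rewrite /idm; case: (i == j); lra.
by rewrite -[RHS](rsum_idm i (fun _ => R1)); apply: eq_rsum => l; ring.
Qed.

Lemma stochastic_mmul M N : stochastic M -> stochastic N -> stochastic (mmul M N).
Proof.
move=> [M0 M1] [N0 N1]; split=> [i j|i].
  by apply: rsum_ge0 => k; apply: Rmult_le_pos.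
rewrite /mmul exchange_rsum -(M1 i); apply: eq_rsum => k.
by rewrite (rsumZ (M i k) (N k)) N1; ring.
Qed.

Lemma stochastic_lprod (P : nat -> Mat n) :
  (forall t, (1 <= t)%nat -> stochastic (P t)) -> forall t, stochastic (lprod P t).
Proof.
move=> HP; elim=> [|t IH]; first exact: stochastic_idm.
exact: stochastic_mmul (HP _ _) IH.
Qed.

Lemma stochastic_row_avg_const M i c : stochastic M -> rsum (fun l => M i l * c) = c.
Proof.
move=> [_ M1]; rewrite (eq_rsum (g := fun l => c * M i l)) ?rsumZ ?M1 => [|l]; ring.
Qed.

Lemma stochastic_avg_le M (v : 'I_n -> R) b i : stochastic M -> (forall l, v l <= b) ->
  rsum (fun l => M i l * v l) <= b.
Proof.
move=> HM Hv; rewrite -[X in _ <= X](stochastic_row_avg_const i b HM).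
by apply: rsum_le => l; apply: Rmult_le_compat_l; [exact: HM.1|].
Qed.

Lemma stochastic_avg_ge M (v : 'I_n -> R) a i : stochastic M -> (forall l, a <= v l) ->
  a <= rsum (fun l => M i l * v l).
Proof.
move=> HM Hv; rewrite -[X in X <= _](stochastic_row_avg_const i a HM).
by apply: rsum_le => l; apply: Rmult_le_compat_l; [exact: HM.1|].
Qed.

Lemma stochastic_avg_sub_le M (v : 'I_n -> R) a b g i i' : stochastic M ->
  (forall l, a <= v l <= b) -> (exists l, g <= M i l /\ g <= M i' l) ->
  rsum (fun l => M i l * v l) - rsum (fun l => M i' l * v l) <= (1 - g) * (b - a).
Proof.
move=> HM Hv [l0 [g1 g2]]; have M0 := HM.1.
have Eb : rsum (fun l => M i l * v l) + rsum (fun l => M i l * (b - v l)) = b.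
  rewrite -rsumD -[RHS](stochastic_row_avg_const i b HM).
  by apply: eq_rsum => l; ring.
have Ea : rsum (fun l => M i' l * v l) = a + rsum (fun l => M i' l * (v l - a)).
  rewrite -{1}(stochastic_row_avg_const i' a HM) -rsumD.
  by apply: eq_rsum => l; ring.
have hv := Hv l0.
have Hb : g * (b - v l0) <= rsum (fun l => M i l * (b - v l)).
  apply: Rle_trans (rsum_ge_term _ _) => [|l]; first by apply: Rmult_le_compat_r; lra.
  by apply: Rmult_le_pos => //; have := Hv l; lra.
have Ha : g * (v l0 - a) <= rsum (fun l => M i' l * (v l - a)).
  apply: Rle_trans (rsum_ge_term _ _) => [|l]; first by apply: Rmult_le_compat_r; lra.
  by apply: Rmult_le_pos => //; have := Hv l; lra.
lra.
Qed.

Lemma stochastic_row_large_entry M i : stochastic M -> exists l, / (INR n + 1) <= M i l.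
Proof.
move=> [M0 M1]; apply: NNPP => Hsmall.
have Hle : forall l, M i l <= / (INR n + 1).
  by move=> l; apply: Rnot_lt_le => Hl; apply: Hsmall; exists l; lra.
have := rsum_le Hle; rewrite rsum_const M1 => Hsum.
have hn := pos_INR n.
suff : INR n * / (INR n + 1) < 1 by lra.
apply: (Rmult_lt_reg_r (INR n + 1)); first lra.
by rewrite Rmult_assoc Rinv_l; lra.
Qed.

End Stochastic.

Lemma monotone_squeeze_cv (lo hi : nat -> R) :
  (forall s m, lo s <= lo (s + m)%nat) -> (forall s m, hi (s + m)%nat <= hi s) ->
  (forall t, lo t <= hi t) -> (forall eps, 0 < eps -> exists t, hi t - lo t < eps) ->
  exists c, forall v : nat -> R, (forall t, lo t <= v t <= hi t) -> Un_cv v c.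
Proof.
move=> lo_mono hi_mono lo_hi gap0.
have lo_growing : Un_growing lo by move=> t; rewrite -addn1.
have lo_ub : has_ub lo.
  exists (hi O) => x [t ->]; have := lo_hi t; have := hi_mono O t; rewrite add0n; lra.
have [c lo_cv] := growing_cv _ lo_growing lo_ub.
exists c => v v_sandwich eps eps_gt0.
have [N HN] := lo_cv (eps / 2) ltac:(lra).
have [t0 Ht0] := gap0 (eps / 2) ltac:(lra).
exists (maxn N t0) => t /leP; rewrite geq_max => /andP [tN tt0].
have := HN t (leP tN); rewrite /R_dist => /Rabs_def2 [h1 h2].
have gap_t : hi t - lo t <= hi t0 - lo t0.
  rewrite -(subnKC tt0).
  by have := lo_mono t0 (t - t0)%nat; have := hi_mono t0 (t - t0)%nat; lra.
have := v_sandwich t; rewrite /R_dist => vt; apply: Rabs_def1; lra.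
Qed.

Section FiniteMax.
Variables (n : nat) (i0 : 'I_n).
Implicit Types v : 'I_n -> R.

Definition fmax v := foldr (fun i acc => Rmax (v i) acc) (v i0) (enum 'I_n).
Definition fmin v := - fmax (fun i => - v i).

Lemma fmax_ub v i : v i <= fmax v.
Proof.
rewrite /fmax; have : i \in enum 'I_n by rewrite mem_enum.
elim: (enum 'I_n) => [|x s IH] //=; rewrite in_cons => /orP [/eqP -> | hs].
  exact: Rmax_l.
exact: Rle_trans (IH hs) (Rmax_r _ _).
Qed.

Lemma fmax_lub v b : (forall i, v i <= b) -> fmax v <= b.
Proof. by move=> H; rewrite /fmax; elim: (enum 'I_n) => [|x s IH] //=; apply: Rmax_lub. Qed.

Lemma fmax_attained v : exists i, fmax v = v i.
Proof.
rewrite /fmax; elim: (enum 'I_n) => [|x s [i IH]] /=; first by exists i0.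
rewrite IH; by apply: (Rmax_case (v x) (v i) (fun y => exists i, y = v i)); [exists x | exists i].
Qed.

Lemma fmin_lb v i : fmin v <= v i.
Proof. by rewrite /fmin; have := fmax_ub (fun i => - v i) i; lra. Qed.

Lemma fmin_glb v a : (forall i, a <= v i) -> a <= fmin v.
Proof.
move=> H; rewrite /fmin; suff : fmax (fun i => - v i) <= - a by lra.
by apply: fmax_lub => i; have := H i; lra.
Qed.

Lemma fmin_attained v : exists i, fmin v = v i.
Proof. by rewrite /fmin; have [i ->] := fmax_attained (fun i => - v i); exists i; ring. Qed.

End FiniteMax.

Section WindowProducts.
Variables (n : nat) (P : nat -> Mat n).
Hypothesis P_stoch : forall t, (1 <= t)%nat -> stochastic (P t).

Fixpoint wprod (s m : nat) : Mat n :=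
  match m with O => @idm n | S m' => mmul (P (s + m'.+1)) (wprod s m') end.

Lemma stochastic_wprod s m : stochastic (wprod s m).
Proof.
elim: m => [|m IH] /=; first exact: stochastic_idm.
by apply: stochastic_mmul IH; apply: P_stoch; rewrite addnS.
Qed.

Lemma lprod_wprod s m i k :
  lprod P (s + m) i k = rsum (fun l => wprod s m i l * lprod P s l k).
Proof.
elim: m i => [|m IH] i; first by rewrite addn0 -[LHS](rsum_idm i (fun l => lprod P s l k)).
rewrite addnS /= -addnS /mmul.
transitivity (rsum (fun x => rsum (fun l => P (s + m.+1) i x * wprod s m x l * lprod P s l k))).
  by apply: eq_rsum => x; rewrite IH -rsumZ; apply: eq_rsum => l; ring.
rewrite exchange_rsum; apply: eq_rsum => l; rewrite [RHS]Rmult_comm -rsumZ.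
by apply: eq_rsum => x; ring.
Qed.

Variable b : nat -> nat.
Hypothesis b_mono : forall r, (b r <= b r.+1)%nat.
Variable gam : R.
Hypotheses (gam_gt0 : 0 < gam) (gam_le1 : gam <= 1).
Hypothesis wprod_scrambling : forall r i i', exists l,
  gam <= wprod (b r) (b r.+1 - b r) i l /\ gam <= wprod (b r) (b r.+1 - b r) i' l.
Variables (i0 k : 'I_n).

Let col t i := lprod P t i k.
Let hi t := fmax i0 (col t).
Let lo t := fmin i0 (col t).

Lemma lo_col_hi t i : lo t <= col t i <= hi t.
Proof. by split; [apply: fmin_lb | apply: fmax_ub]. Qed.

Lemma hi_lprod_add s m : hi (s + m)%nat <= hi s.
Proof.
apply: fmax_lub => i; rewrite /col lprod_wprod.
by apply: stochastic_avg_le (stochastic_wprod _ _) _ => l; exact: (fmax_ub i0 (col s) l).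
Qed.

Lemma lo_lprod_add s m : lo s <= lo (s + m)%nat.
Proof.
apply: fmin_glb => i; rewrite /col lprod_wprod.
by apply: stochastic_avg_ge (stochastic_wprod _ _) _ => l; exact: (fmin_lb i0 (col s) l).
Qed.

(* The extreme entries of column [k] at time [b r.+1] are averages of that column at time
   [b r] by two rows of the window product, which overlap with weight [gam]. *)
Lemma osc_window r : hi (b r.+1) - lo (b r.+1) <= (1 - gam) * (hi (b r) - lo (b r)).
Proof.
rewrite -(subnKC (b_mono r)) /hi /lo.
have [i1 ->] := fmax_attained i0 (col (b r + (b r.+1 - b r))%nat).
have [i2 ->] := fmin_attained i0 (col (b r + (b r.+1 - b r))%nat).
rewrite /col !lprod_wprod; apply: stochastic_avg_sub_le (stochastic_wprod _ _) _ _.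
  exact: lo_col_hi.
exact: wprod_scrambling.
Qed.

Lemma osc_window_pow r : hi (b r) - lo (b r) <= (1 - gam) ^ r * (hi (b O) - lo (b O)).
Proof.
elim: r => [|r IH] /=; first lra.
apply: Rle_trans (osc_window r) _; rewrite Rmult_assoc.
by apply: Rmult_le_compat_l; lra.
Qed.

Lemma osc_small eps : 0 < eps -> exists t, hi t - lo t < eps.
Proof.
move=> eps_gt0; set D := hi (b O) - lo (b O).
have D_ge0 : 0 <= D by have := lo_col_hi (b O) i0; rewrite /D; lra.
have gam_abs : Rabs (1 - gam) < 1 by rewrite Rabs_right; lra.
have [r Hr] := pow_lt_1_zero _ gam_abs (eps / (D + 1)) ltac:(apply: Rdiv_lt_0_compat; lra).
exists (b r); apply: Rle_lt_trans (osc_window_pow r) _; rewrite -/D.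
have := Hr r (le_n r); rewrite Rabs_right; last by apply: Rle_ge; apply: pow_le; lra.
move=> pow_small; apply: Rle_lt_trans (_ : _ <= eps / (D + 1) * D) _.
  by apply: Rmult_le_compat_r; lra.
apply: (Rmult_lt_reg_r (D + 1)); first lra.
by field_simplify; [nra | lra].
Qed.

Lemma lprod_col_cv : exists c, forall i, Un_cv (fun t => lprod P t i k) c.
Proof.
have [|c Hc] := monotone_squeeze_cv lo_lprod_add hi_lprod_add _ osc_small.
  by move=> t; have := lo_col_hi t i0; lra.
by exists c => i; apply: Hc => t; apply: lo_col_hi.
Qed.

End WindowProducts.

Lemma eventually_forall_fin (X : finType) (Q : X -> nat -> Prop) :
  (forall x, exists K, forall k, (K <= k)%nat -> Q x k) ->
  exists K, forall x k, (K <= k)%nat -> Q x k.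
Proof.
move=> H; have [K HK] := fin_all_exists H.
exists (\max_x K x)%nat => x k Kk; apply: HK; exact: leq_trans (leq_bigmax x) Kk.
Qed.

Lemma fin_pos_lb (X : finType) (Q : X -> R -> Prop) :
  (forall x d d', d' <= d -> Q x d -> Q x d') ->
  (forall x, exists2 d, 0 < d & Q x d) -> exists2 d, 0 < d & forall x, Q x d.
Proof.
move=> Q_antitone HQ.
suff [d d_gt0 Hd] : exists2 d, 0 < d & forall x, x \in enum X -> Q x d.
  by exists d => // x; apply: Hd; rewrite mem_enum.
elim: (enum X) => [|x s [d d_gt0 Hd]]; first by exists 1; [lra|].
have [dx dx_gt0 Hx] := HQ x.
exists (Rmin dx d) => [|y]; first exact: Rmin_pos.
rewrite in_cons => /orP [/eqP -> | ys]; first exact: Q_antitone (Rmin_l _ _) Hx.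
exact: Q_antitone (Rmin_r _ _) (Hd y ys).
Qed.

Lemma inv_INR_subseq_cv0 (phi : nat -> nat) : (forall k, (phi k < phi k.+1)%nat) ->
  Un_cv (fun k => / (INR (phi k) + 1)) 0.
Proof.
move=> phi_inc eps eps_gt0.
have phi_ge : forall k, (k <= phi k)%nat by elim=> // k IH; exact: leq_ltn_trans IH (phi_inc k).
have [N [HN N_gt0]] := archimed_cor1 eps eps_gt0.
exists N => k /leP Nk; rewrite /R_dist Rminus_0_r Rabs_right; last first.
  by apply: Rle_ge; apply: Rlt_le; apply: Rinv_0_lt_compat; have := pos_INR (phi k); lra.
apply: Rle_lt_trans HN; apply: Rinv_le_contravar; first exact: lt_0_INR.
have : INR N <= INR (phi k) by apply: le_INR; apply/leP; exact: leq_trans Nk (phi_ge k).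
lra.
Qed.

Definition geb (d x : R) : bool := if Rle_dec d x then true else false.

Section Thresholds.
Variable n : nat.
Implicit Types (M : Mat n) (A B : {set 'I_n}).

Definition Fge M d A : {set 'I_n} := [set j | [exists i in A, geb d (M i j)]].

Lemma FgeP M d A j : reflect (exists2 i, i \in A & d <= M i j) (j \in Fge M d A).
Proof.
rewrite inE; apply: (iffP existsP) => [[i /andP [iA]]|[i iA h]].
  by rewrite /geb; case: Rle_dec => // h _; exists i.
by exists i; rewrite iA /geb; case: Rle_dec.
Qed.

Lemma FsetP M A j : reflect (exists2 i, i \in A & 0 < M i j) (j \in Fset M A).
Proof.
rewrite inE; apply: (iffP existsP) => [[i /andP [iA]]|[i iA h]].
  by rewrite /posb; case: Rlt_dec => // h _; exists i.
by exists i; rewrite iA /posb; case: Rlt_dec.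
Qed.

Lemma Fge_le M d d' A : d' <= d -> Fge M d A \subset Fge M d' A.
Proof.
move=> d'd; apply/subsetP => j /FgeP [i iA hi]; apply/FgeP; exists i => //; lra.
Qed.

Lemma FgeS M d A B : A \subset B -> Fge M d A \subset Fge M d B.
Proof.
move=> AB; apply/subsetP => j /FgeP [i iA hi]; apply/FgeP; exists i => //.
exact: (subsetP AB).
Qed.

Section LargeEntries.
Variables (M : Mat n) (d : R).
Hypotheses (M_stoch : stochastic M) (d_le : d <= / (INR n + 1)).

Lemma Fge_neq0 A : A != set0 -> Fge M d A != set0.
Proof.
case/set0Pn => i iA; have [l hl] := stochastic_row_large_entry i M_stoch.
by apply/set0Pn; exists l; apply/FgeP; exists i => //; lra.
Qed.

Lemma Fge_meet A B : A :&: B != set0 -> Fge M d A :&: Fge M d B != set0.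
Proof.
case/set0Pn => x; rewrite inE => /andP [xA xB].
have /set0Pn [y hy] : Fge M d [set x] != set0.
  by apply: Fge_neq0; apply/set0Pn; exists x; exact: set11.
apply/set0Pn; exists y; rewrite inE.
by rewrite !(subsetP (FgeS M d _) y hy) ?sub1set.
Qed.

End LargeEntries.
End Thresholds.

Section Expansion.
Variables (n : nat) (rel : nat -> nat -> bool).
Hypothesis rel_mono : forall a b b', rel a b -> (b <= b')%nat -> rel a b'.
Implicit Types (M : Mat n) (A B : {set 'I_n}) (S : Mat n -> Prop).

(* The defining condition of [W] (for [rel = leq]) and of [S_1] (for [rel = ltn]). *)
Definition Fset_expands M := forall A B, A != set0 -> B != set0 -> [disjoint A & B] ->
  Fset M A :&: Fset M B = set0 -> rel #|A :|: B| #|Fset M A :|: Fset M B|.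

Definition expands_on M d A B := A != set0 -> B != set0 -> [disjoint A & B] ->
  Fge M d A :&: Fge M d B = set0 -> rel #|A :|: B| #|Fge M d A :|: Fge M d B|.

Definition expands M d := forall A B, expands_on M d A B.

Lemma expands_on_le M d d' A B : d' <= d -> expands_on M d A B -> expands_on M d' A B.
Proof.
move=> d'd HM nA nB dAB hI; apply: rel_mono (HM nA nB dAB _) _.
  by apply/eqP; rewrite -subset0 -hI setISS ?Fge_le.
by apply: subset_leq_card; rewrite setUSS ?Fge_le.
Qed.

Lemma expands_le M d d' : d' <= d -> expands M d -> expands M d'.
Proof. by move=> d'd HM A B; apply: expands_on_le d'd (HM A B). Qed.

Lemma not_expands_on M d A B : ~ expands_on M d A B ->
  [/\ A != set0, B != set0, [disjoint A & B], Fge M d A :&: Fge M d B = set0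
    & ~~ rel #|A :|: B| #|Fge M d A :|: Fge M d B|].
Proof.
move=> H; have [nA|nA] := boolP (A != set0); last by case: H => hA; rewrite hA in nA.
have [nB|nB] := boolP (B != set0); last by case: H => _ hB; rewrite hB in nB.
have [dAB|dAB] := boolP [disjoint A & B]; last by case: H => _ _ hAB; rewrite hAB in dAB.
have [hI|hI] := classic (Fge M d A :&: Fge M d B = set0); last by case: H.
by have [hR|hR] := boolP (rel _ _); first case: H.
Qed.

Lemma Fset_sub_Fge_eventually (u : nat -> Mat n) (L : Mat n) (dd : nat -> R) A :
  (forall i j, Un_cv (fun k => u k i j) (L i j)) -> Un_cv dd 0 ->
  exists K, forall k, (K <= k)%nat -> Fset L A \subset Fge (u k) (dd k) A.
Proof.
move=> u_cv dd_cv.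
suff [K HK] : exists K, forall j k, (K <= k)%nat -> j \in Fset L A -> j \in Fge (u k) (dd k) A.
  by exists K => k Kk; apply/subsetP => j; apply: HK.
apply: eventually_forall_fin => j.
have [/FsetP [i iA Lij]|notin] := boolP (j \in Fset L A); last by exists O.
have [K1 HK1] := u_cv i j (L i j / 2) ltac:(lra).
have [K2 HK2] := dd_cv (L i j / 2) ltac:(lra).
exists (maxn K1 K2) => k; rewrite geq_max => /andP [/leP k1 /leP k2] _.
apply/FgeP; exists i => //.
move: (HK1 k k1) (HK2 k k2); rewrite /R_dist Rminus_0_r => /Rabs_def2 [h1 h2] /Rabs_def2 [h3 h4].
lra.
Qed.

(* Along a convergent subsequence of near-counterexamples with thresholds tending to [0],
   the limit's positive entries eventually pass the thresholds, so the limit would violate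
   [Fset_expands]. *)
Lemma expands_on_uniform S A B : mat_compact S -> (forall M, S M -> Fset_expands M) ->
  exists2 d, 0 < d & forall M, S M -> expands_on M d A B.
Proof.
move=> S_compact S_expands; apply: NNPP => Hnone.
have Hbad : forall N, exists M, S M /\ ~ expands_on M (/ (INR N + 1)) A B.
  move=> N; apply: NNPP => HN; apply: Hnone; exists (/ (INR N + 1)).
    by apply: Rinv_0_lt_compat; have := pos_INR N; lra.
  by move=> M SM; apply: NNPP => hM; apply: HN; exists M.
have [u Hu] := functional_choice _ Hbad.
have [phi [phi_inc [L [SL uL]]]] := S_compact u (fun N => (Hu N).1).
have dd_cv := inv_INR_subseq_cv0 phi_inc.
have [KA HKA] := Fset_sub_Fge_eventually A uL dd_cv.
have [KB HKB] := Fset_sub_Fge_eventually B uL dd_cv.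
set K := maxn KA KB.
have [nA nB dAB hI hR] := not_expands_on (Hu (phi K)).2.
have sA := HKA K (leq_maxl _ _); have sB := HKB K (leq_maxr _ _).
case/negP: hR; apply: rel_mono (S_expands L SL A B nA nB dAB _) _.
  by apply/eqP; rewrite -subset0 -hI setISS.
by apply: subset_leq_card; rewrite setUSS.
Qed.

Lemma expands_uniform S : mat_compact S -> (forall M, S M -> Fset_expands M) ->
  exists2 d, 0 < d & forall M, S M -> expands M d.
Proof.
move=> S_compact S_expands.
have [|x|d d_gt0 Hd] := fin_pos_lb (Q := fun (x : {set 'I_n} * {set 'I_n}) d =>
  forall M, S M -> expands_on M d x.1 x.2).
- by move=> x d d' d'd Hx M SM; apply: expands_on_le d'd (Hx M SM).
- exact: expands_on_uniform.
- by exists d => // M SM A B; apply: (Hd (A, B)).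
Qed.

End Expansion.

Lemma classW_threshold n (S : Mat n -> Prop) : mat_compact S -> (forall M, S M -> classW M) ->
  exists2 d, 0 < d & forall d' M, d' <= d -> S M -> expands leq M d'.
Proof.
have leq_mono (a b b' : nat) : (a <= b -> b <= b' -> a <= b')%nat by apply: leq_trans.
move=> S_compact S_W; have [|d d_gt0 Hd] := expands_uniform leq_mono S_compact.
  move=> M /S_W [_ HW] A B nA nB dAB hI.
  by case: (HW A B nA nB dAB) => [|[]] //; rewrite hI eqxx.
by exists d => // d' M d'd SM; exact (expands_le leq_mono d'd (Hd M SM)).
Qed.

Lemma Sarymsakov_threshold n (S : Mat n -> Prop) :
  mat_compact S -> (forall M, S M -> Sarymsakov M) ->
  exists2 d, 0 < d & forall d' M, d' <= d -> S M -> expands ltn M d'.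
Proof.
have ltn_mono (a b b' : nat) : (a < b -> b <= b' -> a < b')%nat by apply: leq_trans.
move=> S_compact S_S; have [|d d_gt0 Hd] := expands_uniform (rel := ltn) ltn_mono S_compact.
  move=> M /S_S [_ HS] A B nA nB dAB hI.
  by case: (HS A B nA nB dAB) => [|[]] //; rewrite hI eqxx.
by exists d => // d' M d'd SM; exact (expands_le (rel := ltn) ltn_mono d'd (Hd M SM)).
Qed.

Lemma pow_antitone x m k : 0 <= x <= 1 -> (m <= k)%nat -> x ^ k <= x ^ m.
Proof.
move=> hx mk; rewrite -(subnKC mk) pow_add.
have : x ^ (k - m) <= 1 by rewrite -(pow1 (k - m)); apply: pow_incr; lra.
have : 0 <= x ^ m by apply: pow_le; lra.
have : 0 <= x ^ (k - m) by apply: pow_le; lra.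
nra.
Qed.

Section SarymsakovWindows.
Variables (n : nat) (P : nat -> Mat n) (d : R).
Hypotheses (d_gt0 : 0 < d) (d_le : d <= / (INR n + 1)).
Hypothesis P_stoch : forall t, (1 <= t)%nat -> stochastic (P t).
Hypothesis P_expands : forall t, (1 <= t)%nat -> expands leq (P t) d.

Let P_stoch_succ s : stochastic (P s.+1).
Proof. exact: P_stoch. Qed.

(* Walks through the factors [P (s + m)], ..., [P (s + 1)] of [wprod P s m] from the left,
   along entries at least [d]. *)
Fixpoint reach (s m : nat) (A : {set 'I_n}) : {set 'I_n} :=
  match m with O => A | S m' => reach s m' (Fge (P (s + m'.+1)) d A) end.

Lemma reach_neq0 s m A : A != set0 -> reach s m A != set0.
Proof. by elim: m A => [|m IH] A //= nA; apply/IH/Fge_neq0; rewrite ?addnS. Qed.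

Lemma reach_meet s m A B : A :&: B != set0 -> reach s m A :&: reach s m B != set0.
Proof. by elim: m A B => [|m IH] A B //= hAB; apply/IH/Fge_meet; rewrite ?addnS. Qed.

Lemma reach_wprod s m A l : l \in reach s m A -> exists2 i, i \in A & d ^ m <= wprod P s m i l.
Proof.
elim: m A l => [|m IH] A l /=; first by exists l; rewrite // /idm eqxx; lra.
case/IH => x /FgeP [i iA hi] hx; exists i => //.
have Pst : stochastic (P (s + m.+1)) by rewrite addnS.
have Wst := stochastic_wprod P_stoch s m.
apply: Rle_trans (rsum_ge_term (f := fun y => P (s + m.+1) i y * wprod P s m y l) x _).
  by apply: Rmult_le_compat => //; [lra | apply: pow_le; lra].
by move=> y; apply: Rmult_le_pos; [exact: Pst.1 | exact: Wst.1].
Qed.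

Lemma reach_add s m1 m2 A : reach s (m1 + m2) A = reach s m1 (reach (s + m1) m2 A).
Proof. by elim: m2 A => [|m2 IH] A; rewrite ?addn0 // addnS /= IH -addnS addnA. Qed.

Definition expands_by (s m g : nat) := forall A B, A != set0 -> B != set0 ->
  reach s m A :&: reach s m B = set0 -> (#|A :|: B| + g <= #|reach s m A :|: reach s m B|)%nat.

Lemma expands_by_add s m1 m2 g1 g2 :
  expands_by s m1 g1 -> expands_by (s + m1) m2 g2 -> expands_by s (m1 + m2) (g1 + g2).
Proof.
move=> E1 E2 A B nA nB; rewrite !reach_add => hI.
have hI2 : reach (s + m1) m2 A :&: reach (s + m1) m2 B = set0.
  by apply/eqP; apply: contraT => /(reach_meet s m1); rewrite hI eqxx.
have := E1 _ _ (reach_neq0 _ _ nA) (reach_neq0 _ _ nB) hI.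
have := E2 _ _ nA nB hI2.
lia.
Qed.

Lemma expands_by_one s (g : nat) (rel : nat -> nat -> bool) :
  (forall a b, rel a b -> (a + g <= b)%nat) -> expands rel (P s.+1) d -> expands_by s 1 g.
Proof.
move=> relE HP A B nA nB /= hI; rewrite addn1 in hI *; apply/relE/HP => //.
by rewrite -setI_eq0; apply: contraT => /(Fge_meet (P_stoch_succ s) d_le); rewrite hI eqxx.
Qed.

Lemma expands_by0 s m : expands_by s m 0.
Proof.
elim: m s => [|m IH] s; first by move=> A B _ _ /=; rewrite addn0.
rewrite -add1n -[0%nat]/(0 + 0)%nat; apply: expands_by_add (IH _).
by apply: (expands_by_one (rel := leq)) => [a b|]; rewrite ?addn0 //; apply: P_expands.
Qed.

Lemma expands_by_at s m x : (s < x <= s + m)%nat -> expands ltn (P x) d -> expands_by s m 1.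
Proof.
case/andP => sx xsm HPx.
have E1 : expands_by (s + (x - s.+1)) 1 1.
  apply: (expands_by_one (rel := ltn)) => [a b|]; first by rewrite addn1.
  by have -> : (s + (x - s.+1)).+1 = x by lia.
have -> : m = ((x - s.+1) + 1 + (s + m - x))%nat by lia.
exact (expands_by_add (expands_by_add (@expands_by0 s (x - s.+1)) E1)
  (@expands_by0 (s + (x - s.+1 + 1)) (s + m - x))).
Qed.

(* Disjoint reaches of two singletons would cover more than [n] columns. *)
Lemma expands_by_scrambling s m : expands_by s m n -> forall i i',
  exists l, d ^ m <= wprod P s m i l /\ d ^ m <= wprod P s m i' l.
Proof.
move=> E i i'.
have ni : [set i] != set0 by apply/set0Pn; exists i; exact: set11.
have ni' : [set i'] != set0 by apply/set0Pn; exists i'; exact: set11.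
have : reach s m [set i] :&: reach s m [set i'] != set0.
  apply/eqP => hI; have := E _ _ ni ni' hI.
  have : (0 < #|[set i] :|: [set i']|)%nat by rewrite card_gt0 setU_eq0 negb_and ni.
  have : (#|reach s m [set i] :|: reach s m [set i']| <= n)%nat.
    by rewrite -[X in (_ <= X)%nat]card_ord; exact: max_card.
  move=> hle hpos /leq_trans/(_ hle); rewrite -[X in (_ <= X)%nat]add0n leq_add2r.
  by rewrite leqNgt hpos.
case/set0Pn => l; rewrite inE => /andP [/reach_wprod [a + w1] /reach_wprod [b + w2]].
by rewrite !inE => /eqP ea /eqP eb; subst a b; exists l.
Qed.

Variables (j : nat -> nat) (T : nat).
Hypotheses (j1_ge1 : (1 <= j 1)%nat)
  (j_inc : forall r, (1 <= r)%nat -> (j r < j r.+1)%nat)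
  (j_gap : forall r, (1 <= r)%nat -> (j r.+1 - j r <= T)%nat)
  (Pj_expands : forall r, (1 <= r)%nat -> expands ltn (P (j r)) d).

Lemma j_addn a q : (1 <= a)%nat -> (j a + q <= j (a + q))%nat.
Proof.
move=> a_ge1; elim: q => [|q IH]; first by rewrite !addn0.
by have := j_inc (r := (a + q)%nat) (leq_trans a_ge1 (leq_addr _ _)); rewrite (addnS a q); lia.
Qed.

Lemma j_ge1 a : (1 <= a)%nat -> (1 <= j a)%nat.
Proof. by move=> a_ge1; have := j_addn (a - 1) (leqnn 1); rewrite subnKC //; lia. Qed.

Lemma j_sub_le a q : (1 <= a)%nat -> (j (a + q) - j a <= q * T)%nat.
Proof.
move=> a_ge1; elim: q => [|q IH]; first by rewrite addn0 subnn.
have := j_gap (r := (a + q)%nat) (leq_trans a_ge1 (leq_addr _ _)).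
have := j_inc (r := (a + q)%nat) (leq_trans a_ge1 (leq_addr _ _)).
have := j_addn q a_ge1; rewrite (addnS a q) mulSn; lia.
Qed.

Lemma expands_by_j a q : (1 <= a)%nat -> expands_by (j a - 1) (j (a + q) - j a) q.
Proof.
move=> a_ge1; elim: q => [|q IH]; first by rewrite addn0 subnn; apply: expands_by0.
have aq_ge1 : (1 <= a + q)%nat by exact: leq_trans a_ge1 (leq_addr _ _).
have := j_inc aq_ge1; have := j_addn q a_ge1; have := j_ge1 a_ge1 => ja jaq jinc.
have -> : (j (a + q.+1) - j a = (j (a + q) - j a) + (j (a + q).+1 - j (a + q)))%nat.
  by rewrite (addnS a q); lia.
rewrite -[q.+1]addn1; apply: expands_by_add IH _.
apply: (expands_by_at (x := j (a + q))); last exact: Pj_expands.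
by apply/andP; split; lia.
Qed.

(* Window [r] is [(b r, b r.+1]]; it contains the [n] indices [j (1 + r n + q)], [q < n]. *)
Let b r := (j (1 + r * n) - 1)%nat.

Let window_index_succ r : (1 + r.+1 * n = (1 + r * n) + n)%nat.
Proof. by rewrite mulSn; lia. Qed.

Lemma window_start_mono r : (b r <= b r.+1)%nat.
Proof. by rewrite /b window_index_succ; have := j_addn n (leq_addr (r * n) 1); lia. Qed.

Lemma window_expands r : expands_by (b r) (b r.+1 - b r) n.
Proof.
have a_ge1 : (1 <= 1 + r * n)%nat by exact: leq_addr.
have := j_ge1 a_ge1; have := j_addn n a_ge1 => ja jan.
have -> : (b r.+1 - b r = j (1 + r * n + n) - j (1 + r * n))%nat.
  by rewrite /b window_index_succ; lia.
exact: expands_by_j.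
Qed.

Lemma window_length_le r : (b r.+1 - b r <= n * T)%nat.
Proof.
have a_ge1 : (1 <= 1 + r * n)%nat by exact: leq_addr.
have := j_ge1 a_ge1; have := j_addn n a_ge1; have := j_sub_le n a_ge1.
by rewrite /b window_index_succ mulnC; lia.
Qed.

Lemma lprod_col_cv_windows k : exists c, forall i, Un_cv (fun t => lprod P t i k) c.
Proof.
have d_le1 : d <= 1.
  apply: Rle_trans d_le _; rewrite -Rinv_1; apply: Rinv_le_contravar; first lra.
  by have := pos_INR n; lra.
apply: (lprod_col_cv P_stoch window_start_mono (gam := d ^ (n * T))) => //.
- exact: pow_lt.
- by rewrite -(pow1 (n * T)); apply: pow_incr; lra.
- move=> r i i'; have [l [hi hi']] := expands_by_scrambling (@window_expands r) i i'.
  have := pow_antitone (conj (Rlt_le _ _ d_gt0) d_le1) (window_length_le r).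
  by exists l; split; lra.
Qed.

End SarymsakovWindows.

Lemma cv_stochastic_row n (M : nat -> Mat n) i (c : 'I_n -> R) :
  (forall t, stochastic (M t)) -> (forall k, Un_cv (fun t => M t i k) (c k)) ->
  (forall k, 0 <= c k) /\ rsum c = R1.
Proof.
have cv_const (x : R) : Un_cv (fun _ => x) x.
  by move=> e he; exists O => t _; rewrite /R_dist Rminus_diag Rabs_R0.
move=> M_stoch M_cv; split=> [k|].
  by apply: Rle_cv_lim (cv_const 0) (M_cv k) => t; exact: (M_stoch t).1.
apply: UL_sequence (cv_rsum M_cv) _.
by apply: Un_cv_ext (cv_const R1) => t; rewrite (M_stoch t).2.
Qed.

Close Scope R_scope.

Theorem theorem6 (n : nat) (Hn : (0 < n)%N)
  (PP : Mat n -> Prop) (HPW : forall M, PP M -> classW M) (HPc : mat_compact PP)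
  (P : nat -> Mat n) (HP : forall k, (1 <= k)%N -> PP (P k))
  (j : nat -> nat) (Hj1 : (1 <= j 1)%N)
  (Hjinc : forall r, (1 <= r)%N -> (j r < j r.+1)%N)
  (HjS : forall r, (1 <= r)%N -> Sarymsakov (P (j r)))
  (Hjc : mat_compact (fun M => exists r, (1 <= r)%N /\ M = P (j r)))
  (T : nat) (HT : forall r, (1 <= r)%N -> (j r.+1 - j r <= T)%N) :
  exists c : 'I_n -> R,
    (forall i, (0 <= c i)%R) /\ rsum c = R1 /\
    (forall i k, Un_cv (fun t => lprod P t i k) (c k)).
Proof.
have P_stoch t : (1 <= t)%nat -> stochastic (P t) by move=> /HP /HPW [].
have [dW dW_gt0 PP_expands] := classW_threshold HPc HPW.
have Pj_S M : (exists r, (1 <= r)%nat /\ M = P (j r)) -> Sarymsakov M.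
  by case=> r [r_ge1 ->]; exact: HjS.
have [dS dS_gt0 Pj_expands] := Sarymsakov_threshold Hjc Pj_S.
pose d := Rmin (Rmin dW dS) (/ (INR n + 1)).
have d_gt0 : (0 < d)%R.
  by do 2?apply: Rmin_pos => //; apply: Rinv_0_lt_compat; have := pos_INR n; lra.
have col_cv k : exists c, forall i, Un_cv (fun t => lprod P t i k) c.
  apply: (lprod_col_cv_windows d_gt0 (Rmin_r _ _) P_stoch _ Hj1 Hjinc HT) => t t_ge1.
  - exact: PP_expands (Rle_trans _ _ _ (Rmin_l _ _) (Rmin_l _ _)) (HP t t_ge1).
  - by apply: Pj_expands (Rle_trans _ _ _ (Rmin_l _ _) (Rmin_r _ _)) _; exists t.
have [c Hc] := fin_all_exists col_cv.
have [c_ge0 c_sum] := cv_stochastic_row (stochastic_lprod P_stoch) (fun k => Hc k (Ordinal Hn)).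
by exists c.
Qed.
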